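(* Consider a unitary one-parameter channel $\rho_0\mapsto U(\theta)\rho_0U(\theta)^\dagger$ on $\mathbb{C}^d$, with $U(\theta)$ unitary and differentiable in $\theta$, and fixed pure input $\rho_0=|\psi_0\rangle\langle\psi_0|$. Let $H(\theta)$ be the SLD quantum information of $\rho_{out}(\theta)=U(\theta)\rho_0U(\theta)^\dagger$ and $C_\Upsilon(\theta)=4\,\mathrm{tr}\{U'(\theta)\rho_0U'(\theta)^\dagger\}$. Then $H(\theta)=C_\Upsilon(\theta)$ if and only if $\mathrm{tr}\{U(\theta)\rho_0U'(\theta)^\dagger\}=0$.
   Context: A prime denotes $d/d\theta$. The SLD quantum information of a family $\rho(\theta)$ is $H(\theta)=\mathrm{tr}\{\rho\lambda^2\}$ where $\lambda$ is a self-adjoint solution of $\rho'=\frac12(\rho\lambda+\lambda\rho)$. For a unitary channel the canonical Kraus representation consists of the single operator $U(\theta)$, and $C_\Upsilon$ is the Sarovar–Milburn bound $4\sum_k\mathrm{tr}\{\Upsilon_k'\rho_0\Upsilon_k'^\dagger\}$ for it. *)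

From HB Require Import structures.
From mathcomp Require Import all_boot all_order all_algebra.
From mathcomp Require Import all_classical all_reals all_analysis.
From mathcomp Require Import complex.
Set Implicit Arguments. Unset Strict Implicit. Unset Printing Implicit Defensive.
Import Order.TTheory GRing.Theory Num.Theory.
Local Open Scope ring_scope.

Definition adj (R : realType) (m n : nat) (A : 'M[R[i]]_(m, n)) : 'M[R[i]]_(n, m) :=
  (map_mx (@conjc R) A)^T.

Definition unitary (R : realType) (d : nat) (U : 'M[R[i]]_d) : Prop :=
  U *m adj U = 1%:M /\ adj U *m U = 1%:M.

Definition selfadjoint (R : realType) (d : nat) (A : 'M[R[i]]_d) : Prop :=
  adj A = A.

Definition mx_has_deriv (R : realType) (m n : nat) (F : R -> 'M[R[i]]_(m, n))
  (t : R) (F' : 'M[R[i]]_(m, n)) : Prop :=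
  forall i j, is_derive t 1 (fun s => complex.Re (F s i j)) (complex.Re (F' i j)) /\
              is_derive t 1 (fun s => complex.Im (F s i j)) (complex.Im (F' i j)).

Definition SLD_info (R : realType) (d : nat) (rho : R -> 'M[R[i]]_d) (t : R)
  (h : R[i]) : Prop :=
  exists (rho' lam : 'M[R[i]]_d),
    mx_has_deriv rho t rho' /\ selfadjoint lam /\
    rho' = (2%:R)^-1 *: (rho t *m lam + lam *m rho t) /\
    h = \tr (rho t *m (lam *m lam)).

From HB Require Import structures.
From mathcomp Require Import all_boot all_order all_algebra.
From mathcomp Require Import all_classical all_reals all_analysis.
From mathcomp Require Import complex.
From mathcomp Require Import ring.
Set Implicit Arguments.
Unset Strict Implicit.
Unset Printing Implicit Defensive.
Import Order.TTheory GRing.Theory Num.Theory.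
Local Open Scope ring_scope.

(* With [v = U psi0] and [w = U' psi0], the output state is [v v^*], its
   derivative is [w v^* + v w^*], and differentiating [U^* U = 1] shows that
   [b = <v|w>] is purely imaginary, i.e. [<w|v> = - b].  Every SLD [lam] then
   satisfies [lam v = 2 (w - b v)], so [H = |lam v|^2 = 4 (|w|^2 + b^2)], which
   is [C_ups - 4 |b|^2]; and [tr (U rho0 (adj U')) = <w|v> = - b]. *)

Section ComplexDerivative.
Variable R : realType.
Implicit Types (x y : R[i]) (f g : R -> R[i]) (t : R).

Lemma Re_add x y : complex.Re (x + y) = complex.Re x + complex.Re y.
Proof. by case: x => ? ?; case: y. Qed.

Lemma Im_add x y : complex.Im (x + y) = complex.Im x + complex.Im y.
Proof. by case: x => ? ?; case: y. Qed.

Lemma Re_mul x y :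
  complex.Re (x * y) = complex.Re x * complex.Re y - complex.Im x * complex.Im y.
Proof. by case: x => ? ?; case: y. Qed.

Lemma Im_mul x y :
  complex.Im (x * y) = complex.Re x * complex.Im y + complex.Im x * complex.Re y.
Proof. by case: x => ? ?; case: y. Qed.

Lemma Re_conj x : complex.Re x^*%C = complex.Re x.
Proof. by case: x. Qed.

Lemma Im_conj x : complex.Im x^*%C = - complex.Im x.
Proof. by case: x. Qed.

Definition is_cderive f t (c : R[i]) :=
  is_derive t 1 (fun s => complex.Re (f s)) (complex.Re c) /\
  is_derive t 1 (fun s => complex.Im (f s)) (complex.Im c).

Lemma is_cderive_unique f t a b : is_cderive f t a -> is_cderive f t b -> a = b.
Proof.
case=> [[_ ra] [_ ia]] [[_ rb] [_ ib]].
move: ra ia rb ib; case: a => a1 a2; case: b => b1 b2 /= -> -> ra rb.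
by rewrite ra rb.
Qed.

Lemma eq_is_cderive f g t c :
  is_cderive f t c -> (forall s, f s = g s) -> is_cderive g t c.
Proof. by move=> fc fg; have <- : f = g by apply: funext. Qed.

Lemma is_cderive_cst (c : R[i]) t : is_cderive (fun=> c) t 0.
Proof. by split; apply: is_derive_cst. Qed.

Lemma is_cderiveD f g t a b : is_cderive f t a -> is_cderive g t b ->
  is_cderive (fun s => f s + g s) t (a + b).
Proof.
case=> ra ia [rb ib]; split.
- rewrite (_ : (fun s => _) = (fun s => complex.Re (f s)) + (fun s => complex.Re (g s))).
    by apply: (is_derive_eq (is_deriveD ra rb)); rewrite Re_add.
  by apply: funext => s; rewrite Re_add.
- rewrite (_ : (fun s => _) = (fun s => complex.Im (f s)) + (fun s => complex.Im (g s))).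
    by apply: (is_derive_eq (is_deriveD ia ib)); rewrite Im_add.
  by apply: funext => s; rewrite Im_add.
Qed.

Lemma is_cderiveM f g t a b : is_cderive f t a -> is_cderive g t b ->
  is_cderive (fun s => f s * g s) t (a * g t + f t * b).
Proof.
case=> ra ia [rb ib]; split.
- rewrite (_ : (fun s => _) = (fun s => complex.Re (f s)) * (fun s => complex.Re (g s))
             - (fun s => complex.Im (f s)) * (fun s => complex.Im (g s))).
    apply: (is_derive_eq (is_deriveB (is_deriveM ra rb) (is_deriveM ia ib))).
    by rewrite Re_add !Re_mul /GRing.scale /=; ring.
  by apply: funext => s; rewrite Re_mul.
- rewrite (_ : (fun s => _) = (fun s => complex.Re (f s)) * (fun s => complex.Im (g s))
             + (fun s => complex.Im (f s)) * (fun s => complex.Re (g s))).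
    apply: (is_derive_eq (is_deriveD (is_deriveM ra ib) (is_deriveM ia rb))).
    by rewrite Im_add !Im_mul /GRing.scale /=; ring.
  by apply: funext => s; rewrite Im_mul.
Qed.

Lemma is_cderiveJ f t a : is_cderive f t a -> is_cderive (fun s => (f s)^*%C) t a^*%C.
Proof.
case=> ra ia; split.
- by rewrite Re_conj (_ : (fun s => _) = fun s => complex.Re (f s)) //;
    apply: funext => s; rewrite Re_conj.
- rewrite Im_conj (_ : (fun s => _) = - (fun s => complex.Im (f s))).
    exact: is_deriveN.
  by apply: funext => s; rewrite Im_conj.
Qed.

Lemma is_cderive_sum (I : Type) (r : seq I) (f : I -> R -> R[i]) t (c : I -> R[i]) :
  (forall k, is_cderive (f k) t (c k)) ->
  is_cderive (fun s => \sum_(k <- r) f k s) t (\sum_(k <- r) c k).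
Proof.
move=> fc; elim: r => [|k r IH].
  rewrite big_nil; apply: (eq_is_cderive (is_cderive_cst 0 t)) => s.
  by rewrite big_nil.
rewrite big_cons; apply: (eq_is_cderive (is_cderiveD (fc k) IH)) => s.
by rewrite big_cons.
Qed.

End ComplexDerivative.

Arguments is_cderive {R}.

Section Adjoint.
Variable R : realType.

Lemma adj_mul m n p (A : 'M[R[i]]_(m, n)) (B : 'M[R[i]]_(n, p)) :
  adj (A *m B) = adj B *m adj A.
Proof. by rewrite /adj map_mxM trmx_mul. Qed.

Lemma adjK m n (A : 'M[R[i]]_(m, n)) : adj (adj A) = A.
Proof. by apply/matrixP => i j; rewrite /adj !mxE conjcK. Qed.

Lemma adjD m n (A B : 'M[R[i]]_(m, n)) : adj (A + B) = adj A + adj B.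
Proof. by apply/matrixP => i j; rewrite /adj !mxE rmorphD. Qed.

Lemma adjN m n (A : 'M[R[i]]_(m, n)) : adj (- A) = - adj A.
Proof. by apply/matrixP => i j; rewrite /adj !mxE rmorphN. Qed.

Lemma adjZ m n (c : R[i]) (A : 'M[R[i]]_(m, n)) : adj (c *: A) = c^*%C *: adj A.
Proof. by apply/matrixP => i j; rewrite /adj !mxE rmorphM. Qed.

End Adjoint.

Lemma mxtrace_mul1 (R : comNzRingType) (A B : 'M[R]_1) : \tr (A *m B) = \tr A * \tr B.
Proof. by rewrite /mxtrace !big_ord1 mxE big_ord1. Qed.

Section MatrixDerivative.
Variable R : realType.

Lemma mx_has_deriv_unique m n (F : R -> 'M[R[i]]_(m, n)) t A B :
  mx_has_deriv F t A -> mx_has_deriv F t B -> A = B.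
Proof.
by move=> FA FB; apply/matrixP => i j; apply: (is_cderive_unique (FA i j) (FB i j)).
Qed.

Lemma mx_has_deriv_cst m n (A : 'M[R[i]]_(m, n)) t : mx_has_deriv (fun=> A) t 0.
Proof.
move=> i j; have /= := is_cderive_cst (A i j) t.
by rewrite mxE.
Qed.

Lemma mx_has_deriv_mul m n p (F : R -> 'M[R[i]]_(m, n)) (G : R -> 'M[R[i]]_(n, p))
    t F' G' :
  mx_has_deriv F t F' -> mx_has_deriv G t G' ->
  mx_has_deriv (fun s => F s *m G s) t (F' *m G t + F t *m G').
Proof.
move=> FF' GG' i j.
have := is_cderive_sum (index_enum 'I_n) (fun k => is_cderiveM (FF' i k) (GG' k j)).
rewrite big_split /= -!/(\sum_(k < n) _) => H.
change (is_cderive (fun s => (F s *m G s) i j) t ((F' *m G t + F t *m G') i j)).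
rewrite !mxE; apply: (eq_is_cderive H) => s.
by rewrite mxE.
Qed.

Lemma mx_has_deriv_adj m n (F : R -> 'M[R[i]]_(m, n)) t F' :
  mx_has_deriv F t F' -> mx_has_deriv (fun s => adj (F s)) t (adj F').
Proof.
move=> FF' i j.
change (is_cderive (fun s => adj (F s) i j) t (adj F' i j)).
rewrite /adj !mxE; apply: (eq_is_cderive (is_cderiveJ (FF' j i))) => s.
by rewrite !mxE.
Qed.

Lemma unitary_deriv_skew d (U : R -> 'M[R[i]]_d) t U' :
  (forall s, unitary (U s)) -> mx_has_deriv U t U' ->
  adj U' *m U t + adj (U t) *m U' = 0.
Proof.
move=> Uu UU'; apply: (mx_has_deriv_unique (mx_has_deriv_mul (mx_has_deriv_adj UU') UU')).
rewrite (_ : (fun s => _) = fun=> 1%:M); first exact: mx_has_deriv_cst.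
by apply: funext => s; case: (Uu s).
Qed.

End MatrixDerivative.

(* The SLD of a pure state [rho = v v^*] moving with velocity [w], where
   [<w|v> = - <v|w>] expresses that [v] stays a unit vector. *)
Section PureStateSLD.
Variables (R : realType) (d : nat) (v w : 'cV[R[i]]_d).
Hypothesis v_unit : adj v *m v = 1%:M.
Hypothesis overlap_skew : adj w *m v = - (adj v *m w).

Let rho := v *m adj v.
Let B := adj v *m w.
Definition pure_state_deriv := w *m adj v + v *m adj w.
Let D := pure_state_deriv.

Lemma pure_state_derivE : D *m v = w - v *m B.
Proof.
by rewrite mulmxDl -!mulmxA v_unit overlap_skew mulmx1 mulmxN.
Qed.

Lemma selfadjoint_pure_state_deriv : selfadjoint D.
Proof. by rewrite /selfadjoint /D /pure_state_deriv adjD !adj_mul !adjK addrC. Qed.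

Lemma pure_state_deriv_anticomm : rho *m D + D *m rho = D.
Proof.
have -> : rho *m D = v *m B *m adj v + v *m adj w.
  by rewrite mulmxDr -!mulmxA [adj v *m (v *m _)]mulmxA v_unit mul1mx !mulmxA.
rewrite /rho mulmxA pure_state_derivE mulmxBl.
by rewrite addrC addrA subrK.
Qed.

Lemma SLD_pure_state_deriv :
  D = 2%:R^-1 *: (rho *m (2%:R *: D) + (2%:R *: D) *m rho).
Proof.
rewrite -scalemxAr -scalemxAl -scalerDr pure_state_deriv_anticomm scalerA.
by rewrite mulVf ?pnatr_eq0 // scale1r.
Qed.

Section AnySLD.
Variable lam : 'M[R[i]]_d.
Hypothesis lam_SLD : D = 2%:R^-1 *: (rho *m lam + lam *m rho).

(* Multiplying [2 D v = v <v|lam v> + lam v] by [v^*] and using [<v|D v> = 0]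
   forces [<v|lam v> = 0]. *)
Lemma SLD_mul_state : lam *m v = 2%:R *: (w - v *m B).
Proof.
have two_D : 2%:R *: (D *m v) = v *m (adj v *m lam *m v) + lam *m v.
  rewrite scalemxAl lam_SLD scalerA mulfV ?pnatr_eq0 // scale1r mulmxDl /rho.
  by rewrite -!mulmxA v_unit mulmx1.
have lam_mean0 : adj v *m lam *m v = 0.
  have : adj v *m (2%:R *: (D *m v)) = 0.
    by rewrite pure_state_derivE -scalemxAr mulmxBr mulmxA v_unit mul1mx subrr scaler0.
  rewrite two_D mulmxDr mulmxA v_unit mul1mx -mulmxA -mulr2n.
  by move/eqP; rewrite -scaler_nat scaler_eq0 pnatr_eq0 /= => /eqP.
by rewrite -pure_state_derivE two_D lam_mean0 mulmx0 add0r.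
Qed.

Lemma SLD_info_pure_state :
  selfadjoint lam ->
  \tr (rho *m (lam *m lam)) = 4%:R * (\tr (adj w *m w) + \tr B ^+ 2).
Proof.
move=> lam_sa.
have -> : \tr (rho *m (lam *m lam)) = \tr (adj (lam *m v) *m (lam *m v)).
  by rewrite /rho -mulmxA mxtrace_mulC adj_mul lam_sa !mulmxA.
have adjB : adj B = - B by rewrite /B adj_mul adjK overlap_skew.
rewrite SLD_mul_state adjZ conjc_nat -scalemxAl -scalemxAr scalerA mxtraceZ -natrM.
congr (_ * _); rewrite adjD adjN adj_mul adjB mulNmx opprK mulmxDl !mulmxBr.
rewrite [adj w *m (v *m B)]mulmxA overlap_skew mulNmx opprK -!mulmxA.
rewrite [adj v *m (v *m B)]mulmxA v_unit mul1mx subrr addr0 !mxtraceD.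
by rewrite mulmxA -/B mxtrace_mul1 expr2.
Qed.

End AnySLD.
End PureStateSLD.

Theorem lemma4 (R : realType) (d : nat) (U U' : R -> 'M[R[i]]_d)
  (psi0 : 'cV[R[i]]_d) (theta : R) :
  (forall t, unitary (U t)) ->
  (forall t, mx_has_deriv U t (U' t)) ->
  adj psi0 *m psi0 = 1%:M ->
  let rho0 := psi0 *m adj psi0 in
  let rho_out := fun t => U t *m rho0 *m adj (U t) in
  let C_ups := 4%:R * \tr (U' theta *m rho0 *m adj (U' theta)) in
  (exists h, SLD_info rho_out theta h) /\
  (forall h, SLD_info rho_out theta h ->
     (h = C_ups <-> \tr (U theta *m rho0 *m adj (U' theta)) = 0)).
Proof.
move=> Uu UU' psi0_unit rho0 rho_out C_ups.
set v := U theta *m psi0; set w := U' theta *m psi0.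
have v_unit : adj v *m v = 1%:M.
  rewrite adj_mul -mulmxA [adj (U theta) *m _]mulmxA.
  by case: (Uu theta) => _ ->; rewrite mul1mx.
have skew : adj w *m v = - (adj v *m w).
  apply/eqP; rewrite -addr_eq0 !adj_mul !mulmxA -mulmxDl -!(mulmxA (adj psi0)) -mulmxDr.
  by rewrite (unitary_deriv_skew Uu (UU' theta)) mulmx0 mul0mx.
have rhoE : rho_out theta = v *m adj v by rewrite /rho_out adj_mul !mulmxA.
have rho_deriv : mx_has_deriv rho_out theta (pure_state_deriv v w).
  have := mx_has_deriv_mul (mx_has_deriv_mul (UU' theta) (mx_has_deriv_cst rho0 theta))
                           (mx_has_deriv_adj (UU' theta)).
  by rewrite mulmx0 addr0 /pure_state_deriv !adj_mul !mulmxA.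
split.
  eexists; exists (pure_state_deriv v w), (2%:R *: pure_state_deriv v w); do !split => //.
    by rewrite /selfadjoint adjZ conjc_nat selfadjoint_pure_state_deriv.
  by rewrite rhoE; apply: SLD_pure_state_deriv.
move=> h [rho' [lam [rho_deriv' [lam_sa [lam_SLD ->]]]]].
rewrite (mx_has_deriv_unique rho_deriv' rho_deriv) rhoE in lam_SLD *.
rewrite (SLD_info_pure_state v_unit skew lam_SLD lam_sa) /C_ups.
have -> : U' theta *m rho0 *m adj (U' theta) = w *m adj w.
  by rewrite /rho0 adj_mul !mulmxA.
have -> : U theta *m rho0 *m adj (U' theta) = v *m adj w.
  by rewrite /rho0 adj_mul !mulmxA.
rewrite [\tr (w *m _)]mxtrace_mulC [\tr (v *m _)]mxtrace_mulC skew -scaleN1r mxtraceZ mulN1r.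
rewrite mulrDr; split=> /eqP.
  rewrite -subr_eq0 addrAC subrr add0r mulf_eq0 pnatr_eq0 expf_eq0.
  by case/orP=> [// | /andP [_ /eqP ->]]; rewrite oppr0.
by rewrite oppr_eq0 => /eqP ->; rewrite expr0n mulr0 addr0.
Qed.
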